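(* Let $I$ be a $\ast$-homog ideal of $D$ and put $M(I)=\{x\in D:\ (x,I)^{\ast}\neq D\}$, where $(x,I)$ denotes the ideal $xD+I$. Then $M(I)$ is a maximal $\ast$-ideal of $D$, and it is the unique maximal $\ast$-ideal of $D$ containing $I$.
   Context: $D$ is an integral domain with quotient field $K$, and $\ast$ is a star operation on $D$ of finite character (i.e. for every nonzero fractional ideal $I$, $I^{\ast}=\bigcup\{J^{\ast}: J\subseteq I,\ J \text{ a nonzero finitely generated fractional ideal}\}$). A $\ast$-ideal is a nonzero fractional ideal $I$ with $I^\ast=I$; it is of finite type if $I=J^\ast$ for some nonzero finitely generated $J$. A maximal $\ast$-ideal is an integral $\ast$-ideal maximal among proper integral $\ast$-ideals. A $\ast$-homog ideal of $D$ is an integral $\ast$-ideal $I$ of finite type with $I\subsetneq D$ such that $(J+L)^{\ast}\neq D$ for every pair $J,L$ of proper integral $\ast$-ideals of finite type with $I\subseteq J$ and $I\subseteq L$. *)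

(* Fractional ideals are modelled as subsets (K -> Prop) of
   the quotient field K (a fieldType); the domain D is a subring of K whose
   fraction field is K. *)
From HB Require Import structures.
From mathcomp Require Import all_boot all_order all_algebra.
Set Implicit Arguments. Unset Strict Implicit. Unset Printing Implicit Defensive.
Import GRing.Theory.
Local Open Scope ring_scope.

Section StarDefs.
Variable K : fieldType.
Implicit Types (D I J L : K -> Prop) (x y z : K).

Definition subs I J := forall z, I z -> J z.
Definition seteq I J := forall z, I z <-> J z.

Definition domain_with_qf D :=
  [/\ D 0, D 1,
      (forall x y, D x -> D y -> D (x - y)),
      (forall x y, D x -> D y -> D (x * y)) &
      (forall x, exists a b, [/\ D a, D b, b != 0 & x = a / b])].

Definition scale x I : K -> Prop := fun z => exists y, I y /\ z = x * y.
Definition principal D x : K -> Prop := scale x D.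
Definition isum I J : K -> Prop := fun z => exists a b, [/\ I a, J b & z = a + b].

Fixpoint fgen D (s : seq K) : K -> Prop :=
  match s with
  | [::] => fun z => z = 0
  | a :: s' => isum (principal D a) (fgen D s')
  end.

Definition frac_ideal D I :=
  [/\ I 0, (forall x y, I x -> I y -> I (x + y)),
      (forall r x, D r -> I x -> I (r * x)),
      (exists x, I x /\ x != 0) &
      (exists d, [/\ D d, d != 0 & forall x, I x -> D (d * x)])].

Definition fg_frac_ideal D J := frac_ideal D J /\ exists s, seteq J (fgen D s).

Definition integral D I := subs I D.

Definition star_operation D (star : (K -> Prop) -> (K -> Prop)) :=
  [/\ (forall I, frac_ideal D I -> frac_ideal D (star I)),
      ((forall x, x != 0 -> seteq (star (principal D x)) (principal D x)) /\
      (forall x I, x != 0 -> frac_ideal D I ->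
         seteq (star (scale x I)) (scale x (star I)))),
      (forall I, frac_ideal D I -> subs I (star I)),
      (forall I J, frac_ideal D I -> frac_ideal D J -> subs I J ->
         subs (star I) (star J)) &
      (forall I, frac_ideal D I -> seteq (star (star I)) (star I))].

Definition finite_character D (star : (K -> Prop) -> (K -> Prop)) :=
  forall I, frac_ideal D I ->
    seteq (star I)
      (fun z => exists J, [/\ fg_frac_ideal D J, subs J I & star J z]).

Definition star_ideal D star I := frac_ideal D I /\ seteq (star I) I.

Definition finite_type D star I :=
  star_ideal D star I /\ exists J, fg_frac_ideal D J /\ seteq I (star J).

Definition proper_integral D I := integral D I /\ ~ seteq I D.

Definition maximal_star_ideal D star I :=
  [/\ star_ideal D star I, proper_integral D I &
      forall J, star_ideal D star J -> proper_integral D J -> subs I J ->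
        seteq J I].

Definition star_homog D star I :=
  [/\ finite_type D star I, proper_integral D I &
      forall J L, finite_type D star J -> proper_integral D J -> subs I J ->
        finite_type D star L -> proper_integral D L -> subs I L ->
        ~ seteq (star (isum J L)) D].

Definition MI D star I : K -> Prop :=
  fun x => D x /\ ~ seteq (star (isum (principal D x) I)) D.

End StarDefs.

From HB Require Import structures.
From mathcomp Require Import all_boot all_order all_algebra.
From Stdlib Require Import FunctionalExtensionality PropExtensionality.
Set Implicit Arguments. Unset Strict Implicit. Unset Printing Implicit Defensive.
Import GRing.Theory.
Local Open Scope ring_scope.

(* Let F be the family of proper integral *-ideals of finite type containing I.
   A proper *-ideal J containing I contains (x, I)^* for every x in J, so
   J lies in M(I); conversely (x, I)^* belongs to F for x in M(I).  Hence M(I)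
   is the union of F.  The homog condition says that (J + L)^* <> D for J, L
   in F, so (J + L)^* is again in F: F is directed and its union is an ideal; by
   finite character the union of a directed family of *-ideals is a *-ideal.
   Finally 1 is not in M(I), and M(I) contains every proper *-ideal containing
   I, which gives both maximality and uniqueness. *)

Lemma seteq_eq (K : fieldType) (A B : K -> Prop) : seteq A B -> A = B.
Proof.
move=> AB; apply: functional_extensionality => z.
exact/propositional_extensionality/AB.
Qed.

Section StarIdeals.
Variables (K : fieldType) (D : K -> Prop).
Hypothesis HD : domain_with_qf D.
Implicit Types (A B C J L : K -> Prop) (r x y : K).

Lemma D0 : D 0. Proof. by case: HD. Qed.
Lemma D1 : D 1. Proof. by case: HD. Qed.
Lemma D_mul x y : D x -> D y -> D (x * y). Proof. by case: HD => _ _ _ + _; apply. Qed.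

Lemma D_add x y : D x -> D y -> D (x + y).
Proof.
case: HD => _ _ D_sub _ _ Dx Dy.
by have := D_sub _ _ Dx (D_sub _ _ D0 Dy); rewrite sub0r opprK.
Qed.

Definition ideal A :=
  [/\ A 0, (forall x y, A x -> A y -> A (x + y)),
      (forall r x, D r -> A x -> A (r * x)) & integral D A].

Definition nzideal A := ideal A /\ exists x, A x /\ x != 0.

Lemma ideal_D : ideal D.
Proof. by split; [exact: D0 | exact: D_add | exact: D_mul |]. Qed.

Lemma nzideal_D : nzideal D.
Proof. by split; [exact: ideal_D | exists 1; split; [exact: D1 | exact: oner_neq0]]. Qed.

Lemma nzideal_frac A : nzideal A -> frac_ideal D A.
Proof.
move=> [[A0 AD AM AsubD] nzA]; split => //.
by exists 1; split; [exact: D1 | exact: oner_neq0 | move=> x /AsubD; rewrite mul1r].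
Qed.

Lemma frac_nzideal A : frac_ideal D A -> integral D A -> nzideal A.
Proof. by move=> [A0 AD AM nzA _] AsubD. Qed.

Lemma principal_id x : principal D x x.
Proof. by exists 1; rewrite mulr1; split => //; exact: D1. Qed.

Lemma principal_0 x : principal D x 0.
Proof. by exists 0; rewrite mulr0; split => //; exact: D0. Qed.

Lemma principal1 : principal D 1 = D.
Proof.
apply: seteq_eq => z; split => [[y [Dy ->]] | Dz]; first by rewrite mul1r.
by exists z; rewrite mul1r.
Qed.

Lemma ideal_principal x : D x -> ideal (principal D x).
Proof.
move=> Dx; split.
- exact: principal_0.
- move=> _ _ [y [Dy ->]] [z [Dz ->]]; exists (y + z); rewrite mulrDr.
  by split => //; exact: D_add.
- move=> r _ Dr [y [Dy ->]]; exists (r * y); rewrite mulrCA.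
  by split => //; exact: D_mul.
- by move=> _ [y [Dy ->]]; exact: D_mul.
Qed.

Lemma principal_sub x A : ideal A -> A x -> subs (principal D x) A.
Proof. by move=> [_ _ AM _] Ax _ [y [Dy ->]]; rewrite mulrC; apply: AM. Qed.

Lemma isum_subl A B : B 0 -> subs A (isum A B).
Proof. by move=> B0 a Aa; exists a, 0; rewrite addr0. Qed.

Lemma isum_subr A B : A 0 -> subs B (isum A B).
Proof. by move=> A0 b Bb; exists 0, b; rewrite add0r. Qed.

Lemma isum_sub A B C : ideal C -> subs A C -> subs B C -> subs (isum A B) C.
Proof. by move=> [_ CD _ _] AsubC BsubC _ [a [b [Aa Bb ->]]]; apply: CD; [apply: AsubC | apply: BsubC]. Qed.

Lemma ideal_isum A B : ideal A -> ideal B -> ideal (isum A B).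
Proof.
move=> [A0 AD AM AsubD] [B0 BD BM BsubD]; split.
- exact: isum_subl.
- move=> _ _ [a1 [b1 [Aa1 Bb1 ->]]] [a2 [b2 [Aa2 Bb2 ->]]].
  by exists (a1 + a2), (b1 + b2); rewrite addrACA; split; [apply: AD | apply: BD |].
- move=> r _ Dr [a [b [Aa Bb ->]]].
  by exists (r * a), (r * b); rewrite mulrDr; split; [apply: AM | apply: BM |].
- by move=> _ [a [b [Aa Bb ->]]]; apply: D_add; [apply: AsubD | apply: BsubD].
Qed.

Lemma nzideal_isuml A B : nzideal A -> ideal B -> nzideal (isum A B).
Proof.
move=> [iA [x [Ax nx]]] iB; split; first exact: ideal_isum.
by exists x; split => //; apply: isum_subl => //; case: iB.
Qed.

Lemma nzideal_isumr A B : ideal A -> nzideal B -> nzideal (isum A B).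
Proof.
move=> iA [iB [x [Bx nx]]]; split; first exact: ideal_isum.
by exists x; split => //; apply: isum_subr => //; case: iA.
Qed.

Lemma isumA A B C : isum A (isum B C) = isum (isum A B) C.
Proof.
apply: seteq_eq => z; split.
- move=> [a [_ [Aa [b [c [Bb Cc ->]]] ->]]].
  by exists (a + b), c; rewrite addrA; split => //; exists a, b.
- move=> [_ [c [[a [b [Aa Bb ->]]] Cc ->]]].
  by exists a, (b + c); rewrite addrA; split => //; exists b, c.
Qed.

Lemma isumC A B : isum A B = isum B A.
Proof.
by apply: seteq_eq => z; split => -[a [b [Aa Bb ->]]]; exists b, a; rewrite addrC.
Qed.

Lemma fgen0 s : fgen D s 0.
Proof.
by elim: s => [|a s IHs] //=; apply: isum_subr => //; exact: principal_0.
Qed.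

Lemma mem_fgen a s : a \in s -> fgen D s a.
Proof.
elim: s => [|b s IHs] //=; rewrite inE => /orP [/eqP <- | sa].
- by apply: isum_subl; [exact: fgen0 | exact: principal_id].
- by apply: isum_subr; [exact: principal_0 | exact: IHs].
Qed.

Lemma fgen_cat s t : fgen D (s ++ t) = isum (fgen D s) (fgen D t).
Proof.
elim: s => [|a s IHs] /=; last by rewrite IHs isumA.
apply: seteq_eq => z; split => [tz | [_ [b [-> tb ->]]]]; last by rewrite add0r.
by exists 0, z; rewrite add0r.
Qed.

Section StarOperation.
Variable st : (K -> Prop) -> (K -> Prop).
Hypothesis Hstar : star_operation D st.

Lemma star_frac A : frac_ideal D A -> frac_ideal D (st A).
Proof. by case: Hstar => frac _ _ _ _; exact: frac. Qed.

Lemma star_ext A : frac_ideal D A -> subs A (st A).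
Proof. by case: Hstar => _ _ ext _ _; exact: ext. Qed.

Lemma star_mono A B : frac_ideal D A -> frac_ideal D B -> subs A B ->
  subs (st A) (st B).
Proof. by case: Hstar => _ _ _ mono _; exact: mono. Qed.

Lemma star_idem A : frac_ideal D A -> st (st A) = st A.
Proof. by case: Hstar => _ _ _ _ idem fA; apply/seteq_eq/idem. Qed.

Lemma star_D : st D = D.
Proof.
case: Hstar => _ [principal_star _] _ _ _.
by rewrite -principal1; apply/seteq_eq/principal_star/oner_neq0.
Qed.

Lemma subs_star A B : frac_ideal D B -> subs A B -> subs A (st B).
Proof. by move=> fB AB z /AB; exact: star_ext. Qed.

Lemma star_star_ideal A : frac_ideal D A -> star_ideal D st (st A).
Proof. by move=> fA; split; [exact: star_frac | rewrite star_idem]. Qed.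

Lemma star_min A J : frac_ideal D A -> star_ideal D st J -> subs A J ->
  subs (st A) J.
Proof. by move=> fA [fJ /seteq_eq stJ] AJ; rewrite -stJ; exact: star_mono. Qed.

Lemma star_integral A : nzideal A -> integral D (st A).
Proof.
move=> nA; apply: star_min; first exact: nzideal_frac.
  by split; [exact: nzideal_frac nzideal_D | rewrite star_D].
by case: nA => -[].
Qed.

Lemma nzideal_star A : nzideal A -> nzideal (st A).
Proof. by move=> nA; apply: frac_nzideal; [exact/star_frac/nzideal_frac | exact: star_integral]. Qed.

Lemma star_isum_star A B : ideal A -> nzideal B -> st (isum A (st B)) = st (isum A B).
Proof.
move=> iA nB; have fB := nzideal_frac nB.
have fAB := nzideal_frac (nzideal_isumr iA nB).
have fAsB := nzideal_frac (nzideal_isumr iA (nzideal_star nB)).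
have [iAB _] := nzideal_star (nzideal_isumr iA nB).
apply: seteq_eq => z; split; move: z.
- apply: star_min (star_star_ideal fAB) _ => //; apply: isum_sub => //.
  + by apply: subs_star => //; apply: isum_subl; case: nB => -[].
  + by apply: star_mono => //; apply: isum_subr; case: iA.
- apply: star_mono => // _ [a [b [Aa Bb ->]]]; exists a, b; split => //.
  exact: star_ext.
Qed.

Lemma star_isum_star2 A B : nzideal A -> nzideal B ->
  st (isum (st A) (st B)) = st (isum A B).
Proof.
move=> nA nB; have [iB _] := nB; have [isA _] := nzideal_star nA.
by rewrite star_isum_star // isumC star_isum_star // isumC.
Qed.

Lemma finite_typeP J : finite_type D st J -> integral D J ->
  exists2 s, nzideal (fgen D s) & J = st (fgen D s).
Proof.
move=> [_ [J0 [[fJ0 [s /seteq_eq eJ0]] /seteq_eq eJ]]] JD; subst J0.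
by exists s => //; apply: frac_nzideal => // z /(star_ext fJ0); rewrite -eJ; exact: JD.
Qed.

Lemma finite_type_star A s : nzideal (fgen D s) -> st A = st (fgen D s) ->
  finite_type D st (st A).
Proof.
move=> ns ->; split; first exact/star_star_ideal/nzideal_frac.
by exists (fgen D s); split; [split; [exact: nzideal_frac | exists s] |].
Qed.

Section NonzeroIdeal.
Variable I : K -> Prop.
Hypothesis nzI : nzideal I.

Lemma nzideal_principal_isum x : D x -> nzideal (isum (principal D x) I).
Proof. by move=> Dx; apply: nzideal_isumr => //; exact: ideal_principal. Qed.

Lemma sub_MI J : star_ideal D st J -> proper_integral D J -> subs I J ->
  subs J (MI D st I).
Proof.
move=> sJ [JD nJ] IJ x Jx; split; first exact: JD.
have [iJ _] := frac_nzideal sJ.1 JD.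
have xIJ : subs (st (isum (principal D x) I)) J.
  apply: star_min sJ _; first exact/nzideal_frac/nzideal_principal_isum/JD.
  by apply: isum_sub => //; exact: principal_sub.
by move=> xI_full; apply: nJ => z; split => [/JD // | /xI_full /xIJ].
Qed.

Lemma MI_proper_integral : proper_integral D (MI D st I).
Proof.
split=> [x [] // | MD]; have [_ x1I_proper] := (MD 1).2 D1.
apply: x1I_proper => z; split; first exact/star_integral/nzideal_principal_isum/D1.
move=> Dz; apply: star_ext; first exact/nzideal_frac/nzideal_principal_isum/D1.
by apply: isum_subl; [case: nzI => -[] | rewrite principal1].
Qed.

End NonzeroIdeal.

Section HomogIdeal.
Variable I : K -> Prop.
Hypothesis HI : star_homog D st I.

Definition ft_over J := [/\ finite_type D st J, proper_integral D J & subs I J].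

Lemma ft_over_I : ft_over I.
Proof. by case: HI => ftI pI _; split. Qed.

Lemma ft_over_nzideal J : ft_over J -> nzideal J.
Proof. by move=> [[[fJ _] _] [JD _] _]; exact: frac_nzideal. Qed.

Lemma homog_nzideal : nzideal I.
Proof. exact: ft_over_nzideal ft_over_I. Qed.

Lemma ft_over_star A s : nzideal (fgen D s) -> st A = st (fgen D s) ->
  subs I (st A) -> ~ seteq (st A) D -> ft_over (st A).
Proof.
move=> ns eA IA nA; split => //; first exact: finite_type_star eA.
by split => //; rewrite eA; exact: star_integral.
Qed.

Lemma ft_over_directed J L : ft_over J -> ft_over L ->
  exists N, [/\ ft_over N, subs J N & subs L N].
Proof.
move=> oJ oL; have [ftJ pJ IJ] := oJ; have [ftL pL IL] := oL.
have [iJ _] := ft_over_nzideal oJ; have [iL _] := ft_over_nzideal oL.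
have nJL := nzideal_isumr iJ (ft_over_nzideal oL).
have JJL : subs J (st (isum J L)).
  by apply/subs_star/isum_subl; [exact: nzideal_frac | case: iL].
have LJL : subs L (st (isum J L)).
  by apply/subs_star/isum_subr; [exact: nzideal_frac | case: iJ].
exists (st (isum J L)); split => //.
have [s ns eJ] := finite_typeP ftJ pJ.1; have [t nt eL] := finite_typeP ftL pL.1.
apply: (@ft_over_star _ (s ++ t)).
- by rewrite fgen_cat; apply: nzideal_isuml nt.1.
- by rewrite fgen_cat eJ eL star_isum_star2.
- by move=> z /IJ /JJL.
- by case: HI => _ _ homog; exact: homog.
Qed.

Lemma ft_over_principal x : MI D st I x -> ft_over (st (isum (principal D x) I)).
Proof.
move=> [Dx nx]; have [ftI [ID _] _] := ft_over_I.
have [s ns eI] := finite_typeP ftI ID.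
have iPx := ideal_principal Dx.
apply: (@ft_over_star _ (x :: s)) => //.
- exact: nzideal_isumr.
- by rewrite /= {1}eI star_isum_star.
- apply: subs_star; first exact/nzideal_frac/(nzideal_principal_isum homog_nzideal).
  by apply: isum_subr; case: iPx.
Qed.

Lemma MI_union x : MI D st I x <-> exists2 J, ft_over J & J x.
Proof.
split=> [Mx | [J [[sJ _] pJ IJ] Jx]]; last exact: (sub_MI homog_nzideal sJ pJ IJ Jx).
exists (st (isum (principal D x) I)); first exact: ft_over_principal.
have [[I0 _ _ _] _] := homog_nzideal; have [Dx _] := Mx.
apply: (@subs_star (principal D x)); last exact: principal_id.
  exact/nzideal_frac/(nzideal_principal_isum homog_nzideal).
exact: isum_subl.
Qed.

Lemma I_sub_MI : subs I (MI D st I).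
Proof. by move=> x Ix; apply/MI_union; exists I => //; exact: ft_over_I. Qed.

Lemma nzideal_MI : nzideal (MI D st I).
Proof.
have [[I0 _ _ _] [x [Ix nx]]] := homog_nzideal; split; last first.
  by exists x; split => //; exact: I_sub_MI.
split; [exact: I_sub_MI | | | by move=> y []].
- move=> y z /MI_union [J oJ Jy] /MI_union [L oL Lz].
  have [N [oN JN LN]] := ft_over_directed oJ oL.
  have [[_ ND _ _] _] := ft_over_nzideal oN.
  by apply/MI_union; exists N => //; apply: ND; [apply: JN | apply: LN].
- move=> r y Dr /MI_union [J oJ Jy]; have [[_ _ JM _] _] := ft_over_nzideal oJ.
  by apply/MI_union; exists J => //; apply: JM.
Qed.

Lemma ft_over_bound s : (forall a, a \in s -> MI D st I a) ->
  exists2 J, ft_over J & subs (fgen D s) J.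
Proof.
elim: s => [|a s IHs] Ms.
  exists I; first exact: ft_over_I.
  by move=> z /= ->; have [[]] := homog_nzideal.
have [J oJ sJ] : exists2 J, ft_over J & subs (fgen D s) J.
  by apply: IHs => b sb; apply: Ms; rewrite inE sb orbT.
have /MI_union [L oL La] : MI D st I a by apply: Ms; rewrite inE eqxx.
have [N [oN JN LN]] := ft_over_directed oJ oL; have [iN _] := ft_over_nzideal oN.
exists N => //; apply: isum_sub => //; first exact: principal_sub (LN _ La).
by move=> z /sJ /JN.
Qed.

Hypothesis Hfc : finite_character D st.

Lemma MI_star_ideal : star_ideal D st (MI D st I).
Proof.
have fM := nzideal_frac nzideal_MI.
split => // z; split; last exact: star_ext.
move=> /(Hfc fM z) [J [[fJ [s /seteq_eq eJ]] JM Jz]]; subst J.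
have [N oN sN] := ft_over_bound (fun a sa => JM a (mem_fgen sa)).
apply/MI_union; exists N => //; have [[sN' _] _ _] := oN.
exact: star_min fJ sN' sN z Jz.
Qed.

End HomogIdeal.

End StarOperation.
End StarIdeals.

Theorem propositionA (K : fieldType) (D : K -> Prop)
    (star : (K -> Prop) -> (K -> Prop))
    (HD : domain_with_qf D) (Hstar : star_operation D star)
    (Hfc : finite_character D star)
    (I : K -> Prop) (HI : star_homog D star I) :
  maximal_star_ideal D star (MI D star I) /\
  (forall P, maximal_star_ideal D star P -> subs I P -> seteq P (MI D star I)).
Proof.
have nzI := homog_nzideal HI.
have sM := MI_star_ideal HD Hstar HI Hfc.
have pM := MI_proper_integral HD Hstar nzI.
split.
- split => // J sJ pJ MJ.
  have JM := sub_MI HD Hstar nzI sJ pJ (fun z Iz => MJ z (I_sub_MI HD Hstar HI Iz)).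
  by move=> z; split; [apply: JM | apply: MJ].
- move=> P [sP pP maxP] IP.
  by move/seteq_eq: (maxP _ sM pM (sub_MI HD Hstar nzI sP pP IP)) => ->.
Qed.
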